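(* A family of structures $\mathfrak{K}=\{\mathcal{A}_i:i\in\mathbb{N}\}$ is $E_{range}$-learnable if and only if $\mathfrak{K}$ is a $\Sigma^{\mathrm{inf}}_1$-partial order, i.e., for all $i\neq j$, $\mathrm{Th}_{\Sigma^{\mathrm{inf}}_1}(\mathcal{A}_i)\neq\mathrm{Th}_{\Sigma^{\mathrm{inf}}_1}(\mathcal{A}_j)$.
   Context: All structures are countable, have domain $\mathbb{N}$, are in a finite relational signature, and are identified with their atomic diagrams (elements of $2^{\mathbb{N}}$). A family of structures is a countable set of pairwise nonisomorphic such structures. $\mathrm{LD}(\mathfrak{K})\subseteq 2^{\mathbb{N}}$ is the set of structures with domain $\mathbb{N}$ isomorphic to a member of $\mathfrak{K}$ (subspace topology). For an equivalence relation $E$ on a space $X$, $\mathfrak{K}$ is $E$-learnable if there is a continuous $\Gamma:\mathrm{LD}(\mathfrak{K})\to X$ with $\mathcal{S}\cong\mathcal{S}'\iff\Gamma(\mathcal{S})\,E\,\Gamma(\mathcal{S}')$ for all $\mathcal{S},\mathcal{S}'\in\mathrm{LD}(\mathfrak{K})$. $E_{range}$ is the equivalence relation on Baire space $\mathbb{N}^{\mathbb{N}}$ given by $p\,E_{range}\,q\iff\{p(m):m\in\mathbb{N}\}=\{q(m):m\in\mathbb{N}\}$. $\mathrm{Th}_{\Sigma^{\mathrm{inf}}_1}(\mathcal{A})$ is the set of $\Sigma^{\mathrm{inf}}_1$ sentences of $\mathcal{L}_{\omega_1\omega}$ true in $\mathcal{A}$, where a $\Sigma^{\mathrm{inf}}_1$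 formula is a countable disjunction $\bigvee_i\exists\bar y_i\,\psi_i(\bar x,\bar y_i)$ with each $\psi_i$ finitary quantifier-free. *)

From mathcomp Require Import all_boot.
Set Implicit Arguments. Unset Strict Implicit. Unset Printing Implicit Defensive.

(* A finite relational signature: the list of arities of its relation symbols. *)
Definition signature := seq nat.

(* A structure with domain nat: for each relation symbol i, its
   characteristic function on (arity i)-tuples of naturals.  This is the
   atomic diagram (equality on nat is fixed). *)
Record structure (L : signature) := Structure {
  rel : forall i : 'I_(size L), (nth 0 L i).-tuple nat -> bool }.
Arguments rel {L} s i t.

Definition isomorphic (L : signature) (A B : structure L) : Prop :=
  exists f : nat -> nat, bijective f /\
    forall (i : 'I_(size L)) (t : (nth 0 L i).-tuple nat),
      rel A i t = rel B i (map_tuple f t).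

Definition LD (L : signature) (K : nat -> structure L) (S : structure L) : Prop :=
  exists i, isomorphic S (K i).

(* The sets {S' | agree m S S'} form a neighbourhood basis of S in the
   product topology of 2^N (the Cantor-space topology on atomic diagrams). *)
Definition agree (L : signature) (m : nat) (S S' : structure L) : Prop :=
  forall (i : 'I_(size L)) (t : (nth 0 L i).-tuple nat),
    all (fun x => x < m) t -> rel S i t = rel S' i t.

Definition continuous_on_LD (L : signature) (K : nat -> structure L)
  (G : structure L -> nat -> nat) : Prop :=
  forall S, LD K S -> forall n, exists m, forall S', LD K S' -> agree m S S' ->
    forall k, k < n -> G S' k = G S k.

Definition E_range (p q : nat -> nat) : Prop :=
  forall x, (exists m, p m = x) <-> (exists m, q m = x).

Definition E_range_learnable (L : signature) (K : nat -> structure L) : Prop :=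
  exists G : structure L -> nat -> nat,
    continuous_on_LD K G /\
    forall S S', LD K S -> LD K S' -> (isomorphic S S' <-> E_range (G S) (G S')).

Inductive qf :=
  | QTrue
  | QEq of nat & nat
  | QRel of nat & seq nat
  | QNot of qf
  | QAnd of qf & qf
  | QOr of qf & qf.

Fixpoint qf_eval (L : signature) (A : structure L) (a : nat -> nat) (phi : qf) : bool :=
  match phi with
  | QTrue => true
  | QEq x y => a x == a y
  | QRel i vs =>
      match (insub i : option 'I_(size L)) with
      | Some j =>
          match (insub (map a vs) : option ((nth 0 L j).-tuple nat)) with
          | Some t => rel A j t
          | None => false (* ill-formed atomic formula (wrong arity) *)
          end
      | None => false (* ill-formed atomic formula (no such symbol) *)
      end
  | QNot p => ~~ qf_eval A a p
  | QAnd p q => qf_eval A a p && qf_eval A a q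
  | QOr p q => qf_eval A a p || qf_eval A a q
  end.

(* A Sigma^inf_1 sentence: a countable disjunction  \/_k  exists ybar_k psi_k(ybar_k),
   represented by the sequence k |-> psi_k; all (finitely many) variables
   occurring in psi_k are existentially quantified. *)
Definition sigma1_sentence := nat -> qf.

Definition sat_sigma1 (L : signature) (A : structure L) (phi : sigma1_sentence) : Prop :=
  exists k, exists a : nat -> nat, qf_eval A a (phi k).

Definition Th_sigma1 (L : signature) (A : structure L) : sigma1_sentence -> Prop :=
  fun phi => sat_sigma1 A phi.

Definition sigma1_partial_order (L : signature) (K : nat -> structure L) : Prop :=
  forall i j, i <> j -> Th_sigma1 (K i) <> Th_sigma1 (K j).

(* Only the existential (Sigma^inf_1) theory matters, and it is described
   by the countable set of finitary existential quantifier-free formulas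
   true in a structure.

   If the theories of the K i are pairwise distinct, the learner sends S to
   an enumeration of (codes of) the quantifier-free formulas satisfied by
   some tuple of S.  Each entry only inspects a finite tuple, so the learner
   is continuous, and its range is the existential theory of S: equal ranges
   mean equal theories, which single out one K i.

   Conversely, if K i and K j (i <> j) had the same existential theory, then
   for every m the finite diagram of K i restricted to {0,...,m-1} is
   realised in K j, so K j has an isomorphic copy agreeing with K i below m.
   By continuity every value of a learner on K i is a value on that copy,
   hence on K j; by symmetry the learner identifies K i with K j, against
   the hypothesis that the family is pairwise non-isomorphic. *)
From HB Require Import structures.
From mathcomp Require Import all_boot zify.
From Stdlib Require Import FunctionalExtensionality PropExtensionality.
Set Implicit Arguments. Unset Strict Implicit. Unset Printing Implicit Defensive.

Fixpoint qf_encode (p : qf) : GenTree.tree nat :=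
  match p with
  | QTrue => GenTree.Node 0 [::]
  | QEq x y => GenTree.Node 1 [:: GenTree.Leaf x; GenTree.Leaf y]
  | QRel i vs => GenTree.Node 2 (GenTree.Leaf i :: map (@GenTree.Leaf nat) vs)
  | QNot p => GenTree.Node 3 [:: qf_encode p]
  | QAnd p q => GenTree.Node 4 [:: qf_encode p; qf_encode q]
  | QOr p q => GenTree.Node 5 [:: qf_encode p; qf_encode q]
  end.

Definition tree_leaf (t : GenTree.tree nat) : option nat :=
  if t is GenTree.Leaf x then Some x else None.

Fixpoint qf_decode (t : GenTree.tree nat) : option qf :=
  match t with
  | GenTree.Node 0 [::] => Some QTrue
  | GenTree.Node 1 [:: GenTree.Leaf x; GenTree.Leaf y] => Some (QEq x y)
  | GenTree.Node 2 (GenTree.Leaf i :: ls) => Some (QRel i (pmap tree_leaf ls))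
  | GenTree.Node 3 [:: t] => omap QNot (qf_decode t)
  | GenTree.Node 4 [:: t; u] =>
      if (qf_decode t, qf_decode u) is (Some p, Some q) then Some (QAnd p q) else None
  | GenTree.Node 5 [:: t; u] =>
      if (qf_decode t, qf_decode u) is (Some p, Some q) then Some (QOr p q) else None
  | _ => None
  end.

Lemma qf_encodeK : pcancel qf_encode qf_decode.
Proof.
elim=> //= [i vs|p -> |p -> q -> |p -> q ->] //.
by elim: vs => //= v vs [->].
Qed.

HB.instance Definition _ := Countable.copy qf (pcan_type qf_encodeK).

Lemma leq_foldr_maxn (l : seq nat) x : x \in l -> x <= foldr maxn 0 l.
Proof.
elim: l => //= y l IH; rewrite in_cons leq_max => /orP[/eqP ->|/IH ->].
  by rewrite leqnn.
by rewrite orbT.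
Qed.

Lemma nth_leq_foldr_maxn (l : seq nat) v : nth 0 l v <= foldr maxn 0 l.
Proof.
by case: (ltnP v (size l)) => [/(mem_nth 0)/leq_foldr_maxn | /(nth_default 0) ->].
Qed.

(* Any map injective on {0,...,m-1} agrees there with a permutation of nat:
   follow it below m, fill up {0,...,N-1} with the missing values in
   increasing order, and be the identity from N on. *)
Lemma extend_inj_to_bij m (b : nat -> nat) :
  (forall x y, x < m -> y < m -> b x = b y -> x = y) ->
  exists2 pi : nat -> nat, bijective pi & forall x, x < m -> pi x = b x.
Proof.
move=> binj; set s1 := map b (iota 0 m).
set N := m + (foldr maxn 0 s1).+1.
set s := s1 ++ [seq y <- iota 0 N | y \notin s1].
have s1N y : y \in s1 -> y < N by move/leq_foldr_maxn; rewrite /N; lia.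
have s_uniq : uniq s.
  rewrite cat_uniq filter_uniq ?iota_uniq // andbT.
  apply/andP; split; last by apply/hasPn => y; rewrite mem_filter => /andP[].
  rewrite map_inj_in_uniq ?iota_uniq // => x y.
  by rewrite !mem_iota => /andP[_ hx] /andP[_ hy]; apply: binj.
have s_iota : s =i iota 0 N.
  move=> y; rewrite mem_cat mem_filter.
  by case Hy: (y \in s1) => //=; rewrite mem_iota /= s1N.
have size_s : size s = N.
  by rewrite (perm_size (uniq_perm s_uniq (iota_uniq 0 N) s_iota)) size_iota.
exists (fun x => if x < N then nth 0 s x else x).
  exists (fun y => if y < N then index y s else y) => x /=.
    case: (ltnP x N) => hx; last by rewrite ltnNge hx.
    have sx : nth 0 s x \in s by rewrite mem_nth ?size_s.
    by move: (sx); rewrite s_iota mem_iota /= => -> ; rewrite index_uniq ?size_s.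
  case: (ltnP x N) => hx; last by rewrite ltnNge hx.
  have sx : x \in s by rewrite s_iota mem_iota.
  by rewrite -size_s index_mem sx nth_index.
move=> x hx; have -> : x < N by rewrite /N; lia.
by rewrite nth_cat size_map size_iota hx (nth_map 0) ?size_iota // nth_iota.
Qed.

Section Structures.
Variable L : signature.
Implicit Types (S A B : structure L) (p : qf).

Definition sat_qf S p := exists a, qf_eval S a p.

Lemma qf_eval_rel S a (r : 'I_(size L)) (t : (nth 0 L r).-tuple nat) :
  qf_eval S a (QRel r t) = rel S r (map_tuple a t).
Proof. by rewrite /= valK (valK (map_tuple a t)). Qed.

Lemma agree_le m n S S' : n <= m -> agree m S S' -> agree n S S'.
Proof. by move=> le_nm HS i t /allP Ht; apply: HS; apply/allP => x /Ht /leq_trans; apply. Qed.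

Lemma qf_eval_agree m S S' a p :
  (forall v, a v < m) -> agree m S S' -> qf_eval S a p = qf_eval S' a p.
Proof.
move=> a_lt HS; elim: p => //= [i vs|p ->|p -> q ->|p -> q ->] //.
case: insub => [j|] //; case: insubP => [t _ Ht|] //.
by apply: HS; rewrite Ht; apply/allP => x /mapP[v _ ->].
Qed.

Fixpoint qf_var_bound p : nat :=
  match p with
  | QTrue => 0
  | QEq x y => (maxn x y).+1
  | QRel _ vs => (foldr maxn 0 vs).+1
  | QNot p => qf_var_bound p
  | QAnd p q | QOr p q => maxn (qf_var_bound p) (qf_var_bound q)
  end.

Lemma eq_qf_eval S a a' p :
  (forall v, v < qf_var_bound p -> a v = a' v) -> qf_eval S a p = qf_eval S a' p.
Proof.
elim: p a a' => //= [x y|i vs|p IH|p IHp q IHq|p IHp q IHq] a a' Ha.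
- by rewrite !Ha // ltnS leq_max leqnn ?orbT.
- suff -> : map a vs = map a' vs by [].
  by apply/eq_in_map => v /leq_foldr_maxn Hv; apply: Ha.
- by rewrite (IH a a').
- by rewrite (IHp a a') ?(IHq a a') // => v Hv; apply: Ha; rewrite leq_max Hv ?orbT.
- by rewrite (IHp a a') ?(IHq a a') // => v Hv; apply: Ha; rewrite leq_max Hv ?orbT.
Qed.

Lemma qf_eval_embed A B f a p : injective f ->
  (forall (i : 'I_(size L)) (t : (nth 0 L i).-tuple nat),
     rel A i t = rel B i (map_tuple f t)) ->
  qf_eval A a p = qf_eval B (f \o a) p.
Proof.
move=> f_inj f_rel; elim: p => //= [x y|i vs|p ->|p -> q ->|p -> q ->] //.
  by rewrite (inj_eq f_inj).
case: insub => [j|] //; case: insubP => [t _ Ht|Hn].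
  have -> : insub (map (f \o a) vs) = Some (map_tuple f t).
    by rewrite map_comp -Ht (valK (map_tuple f t)).
  exact: f_rel.
by rewrite insubN // size_map; rewrite size_map in Hn.
Qed.

Lemma iso_refl A : isomorphic A A.
Proof.
exists id; split; first exact: (Bijective (g := id)).
by move=> i t; congr (rel A i); apply: val_inj; rewrite /= map_id.
Qed.

Lemma iso_sym A B : isomorphic A B -> isomorphic B A.
Proof.
move=> [f [[g fK gK] f_rel]]; exists g; split; first exact: (Bijective gK fK).
move=> i t; rewrite f_rel; congr (rel B i); apply: val_inj => /=.
by rewrite -map_comp (eq_map gK) map_id.
Qed.

Lemma iso_trans A B C : isomorphic A B -> isomorphic B C -> isomorphic A C.
Proof.
move=> [f [f_bij f_rel]] [g [g_bij g_rel]]; exists (g \o f).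
split; first exact: bij_comp.
by move=> i t; rewrite f_rel g_rel; congr (rel C i); apply: val_inj; rewrite /= map_comp.
Qed.

Lemma sat_qf_iso A B p : isomorphic A B -> sat_qf A p <-> sat_qf B p.
Proof.
suff sub A' B' : isomorphic A' B' -> sat_qf A' p -> sat_qf B' p.
  by move=> AB; split; apply: sub => //; apply: iso_sym.
move=> [f [f_bij f_rel]] [a Ha]; exists (f \o a).
by rewrite -(qf_eval_embed _ _ (bij_inj f_bij) f_rel).
Qed.

Lemma Th_sigma1_eqP A B :
  Th_sigma1 A = Th_sigma1 B <-> forall p, sat_qf A p <-> sat_qf B p.
Proof.
split=> [eqAB p | eqAB].
  have sat_const S : Th_sigma1 S (fun _ => p) <-> sat_qf S p.
    by split=> [[_ Sp]|Sp]; [|exists 0].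
  by split=> /sat_const Hp; apply/sat_const; [rewrite -eqAB | rewrite eqAB].
apply: functional_extensionality => phi; apply: propositional_extensionality.
by split=> [[k /eqAB]|[k /eqAB]]; exists k.
Qed.

(* Failing entries output 0, which lies in every range and so never separates
   two structures; formulas are reported shifted by one. *)
Definition sigma1_learner S (k : nat) : nat :=
  if (unpickle k : option (qf * seq nat)) is Some (p, l) then
    if qf_eval S (nth 0 l) p then (pickle p).+1 else 0
  else 0.

Lemma sigma1_learner_range S x :
  (exists k, sigma1_learner S k = x) <->
  x = 0 \/ exists2 p, x = (pickle p).+1 & sat_qf S p.
Proof.
split=> [[k <-]|[->|[p -> [a Ha]]]].
- rewrite /sigma1_learner; case: unpickle => [[p l]|]; last by left.
  by case: ifP => Hp; [right; exists p => //; exists (nth 0 l) | left].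
- by exists (pickle (QNot QTrue, [::] : seq nat)); rewrite /sigma1_learner pickleK.
- exists (pickle (p, mkseq a (qf_var_bound p))); rewrite /sigma1_learner pickleK.
  by rewrite (@eq_qf_eval _ _ a) ?Ha // => v Hv; rewrite nth_mkseq.
Qed.

Lemma E_range_sigma1_learner A B :
  E_range (sigma1_learner A) (sigma1_learner B) <->
  forall p, sat_qf A p <-> sat_qf B p.
Proof.
have sat_in_range S p : sat_qf S p -> exists k, sigma1_learner S k = (pickle p).+1.
  by move=> Sp; apply/sigma1_learner_range; right; exists p.
have range_sat S p :
    (exists k, sigma1_learner S k = (pickle p).+1) -> sat_qf S p.
  by case/sigma1_learner_range => // -[q [/(pcan_inj (@pickleK _)) ->]].
split=> [eqAB p | eqAB x].
  by split=> /sat_in_range/eqAB/range_sat.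
rewrite !sigma1_learner_range.
by split=> -[-> | [p -> /eqAB Sp]]; [left | right; exists p | left | right; exists p].
Qed.

Lemma sigma1_learner_local k :
  exists m, forall S S', agree m S S' -> sigma1_learner S' k = sigma1_learner S k.
Proof.
rewrite /sigma1_learner; case: unpickle => [[p l]|]; last by exists 0.
exists (foldr maxn 0 l).+1 => S S' HS.
by rewrite (qf_eval_agree _ _ HS) // => v; rewrite ltnS nth_leq_foldr_maxn.
Qed.

Lemma continuous_on_LD_local (K : nat -> structure L) G :
  (forall k, exists m, forall S S', agree m S S' -> G S' k = G S k) ->
  continuous_on_LD K G.
Proof.
move=> G_local S _ n; suff [m Hm] : exists m, forall S S', agree m S S' ->
    forall k, k < n -> G S' k = G S k by exists m => S' _; apply: Hm.
elim: n => [|n [m IH]]; first by exists 0.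
have [b Hb] := G_local n; exists (maxn m b) => S0 S1 HS k.
rewrite ltnS leq_eqVlt => /orP[/eqP ->|lt_kn].
  by apply: Hb; apply: agree_le HS; rewrite leq_maxr.
by apply: IH => //; apply: agree_le HS; rewrite leq_maxl.
Qed.

Fixpoint seqs_below (n m : nat) : seq (seq nat) :=
  if n is n'.+1 then [seq x :: s | x <- iota 0 m, s <- seqs_below n' m] else [:: [::]].

Lemma mem_seqs_below m s : all (fun x => x < m) s -> s \in seqs_below (size s) m.
Proof.
elim: s => [|x s IH] //= /andP[hx hs].
by apply: (allpairs_f (fun x s => x :: s)); rewrite ?mem_iota ?IH.
Qed.

Definition atoms_below m : seq qf :=
  [seq QEq x y | x <- iota 0 m, y <- iota 0 m] ++
  [seq QRel r s | r <- iota 0 (size L), s <- seqs_below (nth 0 L r) m].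

(* The atomic diagram of A on {0,...,m-1}, with variable v standing for v. *)
Definition diagram A m : qf :=
  foldr QAnd QTrue [seq if qf_eval A id p then p else QNot p | p <- atoms_below m].

Lemma qf_eval_foldr_and S a (l : seq qf) :
  qf_eval S a (foldr QAnd QTrue l) = all (qf_eval S a) l.
Proof. by elim: l => //= p l ->. Qed.

Lemma diagram_self A m : qf_eval A id (diagram A m).
Proof.
rewrite /diagram qf_eval_foldr_and all_map; apply/allP => p _ /=.
by case Hp: (qf_eval A id p) => /=; rewrite Hp.
Qed.

Lemma qf_eval_diagram A B m b : qf_eval B b (diagram A m) ->
  forall p, p \in atoms_below m -> qf_eval B b p = qf_eval A id p.
Proof.
rewrite /diagram qf_eval_foldr_and all_map => /allP Hb p /Hb /=.
by case: (qf_eval A id p) => // /negbTE.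
Qed.

Lemma iso_copy_agree A B m :
  (forall p, sat_qf A p -> sat_qf B p) ->
  exists2 B', isomorphic B' B & agree m A B'.
Proof.
move=> AB; have [b /qf_eval_diagram Hb] := AB _ (ex_intro _ id (diagram_self A m)).
have b_inj x y : x < m -> y < m -> b x = b y -> x = y.
  move=> hx hy bxy.
  have xy_atom : QEq x y \in atoms_below m by rewrite mem_cat (allpairs_f QEq) ?mem_iota.
  by have := Hb _ xy_atom; rewrite /= bxy eqxx => /esym/eqP.
have [pi pi_bij pi_b] := extend_inj_to_bij b_inj.
exists (Structure (fun r t => rel B r (map_tuple pi t))); first by exists pi.
move=> r t t_lt /=.
have -> : map_tuple pi t = map_tuple b t.
  by apply: val_inj; apply/eq_in_map => x /(allP t_lt); apply: pi_b.
have t_atom : QRel r t \in atoms_below m.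
  rewrite mem_cat; apply/orP; right.
  apply: (@allpairs_f_dep _ _ _ (fun r s => QRel r s)); first by rewrite mem_iota /=.
  by have := mem_seqs_below t_lt; rewrite size_tuple.
have := Hb _ t_atom; rewrite !qf_eval_rel => ->.
by congr (rel A r); apply: val_inj; rewrite /= map_id.
Qed.

End Structures.

Lemma learner_range_incl L (K : nat -> structure L) G i j :
  continuous_on_LD K G ->
  (forall S S', LD K S -> LD K S' -> isomorphic S S' -> E_range (G S) (G S')) ->
  (forall p, sat_qf (K i) p -> sat_qf (K j) p) ->
  forall k, exists k', G (K j) k' = G (K i) k.
Proof.
move=> G_cont G_iso ij k.
have LDi : LD K (K i) by exists i; apply: iso_refl.
have [m Hm] := G_cont (K i) LDi k.+1.
have [B' B'j agreeB'] := iso_copy_agree m ij.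
have LDB' : LD K B' by exists j.
have LDj : LD K (K j) by exists j; apply: iso_refl.
rewrite -(Hm B' LDB' agreeB' k (ltnSn k)).
by apply/(G_iso _ _ LDB' LDj B'j); exists k.
Qed.

Lemma E_range_learnable_sigma1_partial_order L (K : nat -> structure L) :
  (forall i j, i <> j -> ~ isomorphic (K i) (K j)) ->
  E_range_learnable K -> sigma1_partial_order K.
Proof.
move=> Kiso [G [G_cont G_learn]] i j ij /Th_sigma1_eqP eqij; apply: (Kiso i j ij).
have LD_K k : LD K (K k) by exists k; apply: iso_refl.
have G_iso S S' LDS LDS' := (G_learn S S' LDS LDS').1.
apply/(G_learn _ _ (LD_K i) (LD_K j)) => x.
by split=> -[k <-]; apply: (learner_range_incl G_cont G_iso) => p /eqij.
Qed.

Lemma sigma1_partial_order_E_range_learnable L (K : nat -> structure L) :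
  sigma1_partial_order K -> E_range_learnable K.
Proof.
move=> Kpo; exists (@sigma1_learner L); split.
  by apply: continuous_on_LD_local; apply: sigma1_learner_local.
move=> S S' [i Si] [j S'j]; rewrite E_range_sigma1_learner; split.
  by move=> SS' p; apply: sat_qf_iso.
move=> eqSS'; have eqij : i = j.
  case: (eqVneq i j) => // /eqP ij; exfalso; apply: (Kpo i j ij).
  by apply/Th_sigma1_eqP => p; rewrite -(sat_qf_iso p Si) -(sat_qf_iso p S'j).
by rewrite eqij in Si; apply: iso_trans Si (iso_sym S'j).
Qed.

Theorem mainTheorem6 (L : signature) (K : nat -> structure L)
  (Hfam : forall i j, i <> j -> ~ isomorphic (K i) (K j)) :
  E_range_learnable K <-> sigma1_partial_order K.
Proof.
split; first exact: E_range_learnable_sigma1_partial_order.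
exact: sigma1_partial_order_E_range_learnable.
Qed.
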